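(* Let $\mathcal{A}=(A_1,\dots,A_4)\in H^0(\bigwedge^2\mathcal{F}\otimes\mathcal{E}\otimes\det\mathcal{E}^\vee)$, let $p\in\mathbb{P}^1$ with uniformizer $u$, and fix $1\le I<J\le5$, $1\le K\le4$. Suppose that (i) $a^{(K)}_{IJ}\equiv0\pmod{u^2}$; (ii) $a^{(k)}_{IJ}\equiv0\pmod u$ for all $1\le k\le4$; (iii) $a^{(K)}_{Ij}\equiv0\pmod u$ for all $1\le j\le5$; (iv) $a^{(K)}_{iJ}\equiv0\pmod u$ for all $1\le i\le5$. Then $\mathcal{A}$ is singular above $p$.
   Context: Work over $\mathbb{C}$. Fix $g\ge0$, $N=g+4$, $\mathcal{E}\cong\bigoplus_{k=1}^4\mathcal{O}_{\mathbb{P}^1}(e_k)$ with $e_1\le\dots\le e_4$, $\sum e_k=N$, and $\mathcal{F}\cong\bigoplus_{i=1}^5\mathcal{O}(f_i)$ with $f_1\le\dots\le f_5$, $\sum f_i=2N$, with these splittings fixed; $d^{(k)}_{ij}=f_i+f_j+e_k-N$. A section $\mathcal{A}\in H^0(\bigwedge^2\mathcal{F}\otimes\mathcal{E}\otimes\det\mathcal{E}^\vee)$ is a quadruple $(A_1,\dots,A_4)$ of $5\times5$ alternating matrices whose $(i,j)$ entry $a^{(k)}_{ij}$ of $A_k$ is a homogeneous form in $\mathbb{C}[s,t]$ of degree $d^{(k)}_{ij}$ (zero if this is negative), $a^{(k)}_{ji}=-a^{(k)}_{ij}$. Let $\mathcal{A}(\mathbf{x})=\sum_k A_kx_k$, and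 let $C_{\mathcal{A}}\subset\mathbb{P}(\mathcal{E})$ (fiber coordinates $x_1,\dots,x_4$) be the closed subscheme cut out by the five $4\times4$ principal sub-Pfaffians of $\mathcal{A}(\mathbf{x})$. $\mathcal{A}$ is smooth at a point $P\in C_{\mathcal{A}}$ if the Zariski tangent space of $C_{\mathcal{A}}$ at $P$ is 1-dimensional, and singular at $P$ otherwise; $\mathcal{A}$ is singular above $p\in\mathbb{P}^1$ if it is singular at some point of $C_{\mathcal{A}}$ lying over $p$. For a form $a$ and a uniformizer (linear form) $u$ at $p$, $a\equiv0\pmod{u^m}$ means $u^m$ divides $a$. *)

From HB Require Import structures.
From mathcomp Require Import all_boot all_order all_algebra.
From mathcomp Require Import mpoly.
Set Implicit Arguments. Unset Strict Implicit. Unset Printing Implicit Defensive.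
Import Order.TTheory GRing.Theory Num.Theory.
Local Open Scope ring_scope.

Section Defs.
Variable F : fieldType.

(* Binary forms: elements of F[s,t] = {mpoly F[2]}; variable 0 is s, 1 is t. *)

Definition dvd_pow (u a : {mpoly F[2]}) (m : nat) : Prop :=
  exists b : {mpoly F[2]}, a = u ^+ m * b.

(* p = [p_0 : p_1] is a point of P^1 (homogeneous coordinates, not both 0). *)
Definition P1_point (p : 'I_2 -> F) : Prop := exists i, p i != 0.

Definition uniformizer (p : 'I_2 -> F) (u : {mpoly F[2]}) : Prop :=
  [/\ u \is 1.-homog, u != 0 & u.@[p] = 0].

(* The data (g, e, f, A): splitting types and a section A = (A_1..A_4) of
   wedge^2 F (x) E (x) det E^vee, i.e. 4 alternating 5x5 matrices of binary
   forms, a^(k)_ij homogeneous of degree d^(k)_ij = f_i + f_j + e_k - N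
   (zero if this degree is negative), N = g + 4. Indices are 0-based. *)
Definition splitting_data (g : nat) (e : 'I_4 -> int) (f : 'I_5 -> int) : Prop :=
  [/\ (forall i j : 'I_4, (i <= j)%N -> e i <= e j),
      \sum_(k < 4) e k = (g + 4)%:Z,
      (forall i j : 'I_5, (i <= j)%N -> f i <= f j) &
      \sum_(i < 5) f i = (2 * (g + 4))%:Z].

Definition is_section (g : nat) (e : 'I_4 -> int) (f : 'I_5 -> int)
  (A : 'I_4 -> 'I_5 -> 'I_5 -> {mpoly F[2]}) : Prop :=
  [/\ (forall k i, A k i i = 0),
      (forall k i j, A k j i = - A k i j) &
      (forall k i j,
         let d := f i + f j + e k - (g + 4)%:Z in
         (0 <= d -> A k i j \is (absz d).-homog) /\ (d < 0 -> A k i j = 0))].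

(* Principal 4x4 sub-Pfaffians of a 5x5 alternating matrix M: Pf_m is the
   Pfaffian of M with row and column m deleted. *)
Definition pf4 (R : comPzRingType) (M : 'I_4 -> 'I_4 -> R) : R :=
  M 0 1 * M 2 3 - M 0 2 * M 1 3 + M 0 3 * M 1 2.

Definition subpf (R : comPzRingType) (M : 'I_5 -> 'I_5 -> R) (m : 'I_5) : R :=
  pf4 (fun i j : 'I_4 => M (lift m i) (lift m j)).

Definition fiberM (A : 'I_4 -> 'I_5 -> 'I_5 -> {mpoly F[2]}) (p : 'I_2 -> F)
  (x : 'I_4 -> F) (i j : 'I_5) : F :=
  \sum_(k < 4) (A k i j).@[p] * x k.

(* The point [x] of P^3 = P(E)_p lies on C_A. *)
Definition on_CA A p (x : 'I_4 -> F) : Prop :=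
  (exists k, x k != 0) /\ forall m, subpf (fiberM A p x) m = 0.

(* Local chart of P^1 around p: lambda |-> p + lambda q, with q not
   proportional to p; in this chart every O(d) is trivialised by v^d where
   v is the linear form with v(p)=1, v(q)=0, so that P(E) is A^1 x P^3 with
   fiber coordinates x_1..x_4 and C_A is cut out by the sub-Pfaffians of
   sum_k a^(k)_ij(p + lambda q) x_k. *)
Definition chartq (p : 'I_2 -> F) : 'I_2 -> F :=
  fun r => if p ord_max != 0 then (r == ord0)%:R else (r == ord_max)%:R.

(* The matrix A(lambda, x) evaluated at the dual-number point
   (lambda, x) = (eps*mu, x + eps*xi), computed in F[eps] (eps = 'X). *)
Definition dualM (A : 'I_4 -> 'I_5 -> 'I_5 -> {mpoly F[2]}) (p : 'I_2 -> F)
  (x : 'I_4 -> F) (mu : F) (xi : 'I_4 -> F) (i j : 'I_5) : {poly F} :=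
  \sum_(k < 4)
     mmap (@polyC F) (fun r => (p r)%:P + (mu * chartq p r) *: 'X) (A k i j)
     * ((x k)%:P + (xi k) *: 'X).

(* Jacobian of the 5 local equations w.r.t. the 5 coordinates
   (lambda, x_1, .., x_4) at (0, x): entry (m, c) is the eps-coefficient of
   Pf_m at the point displaced by eps along the c-th coordinate. *)
Definition jacobian A p (x : 'I_4 -> F) : 'M[F]_(5, 5) :=
  \matrix_(m < 5, c < 5)
     (subpf (dualM A p x (c == ord0)%:R (fun k => (c == lift ord0 k)%:R)) m)`_1.

(* Zariski tangent space of C_A at P = (p, [x]), computed in the affine
   chart {x_r = 1} of the fiber (r = first index with x_r <> 0): row vectors
   v in F^5 (coordinates lambda, x_1..x_4) with J v = 0 and v_(x_r) = 0. *)
Definition chart_index (x : 'I_4 -> F) : 'I_4 := odflt ord0 [pick r | x r != 0].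

Definition tangent_space A p (x : 'I_4 -> F) : 'M[F]_5 :=
  (kermx (jacobian A p x)^T
     :&: kermx (delta_mx (lift ord0 (chart_index x)) ord0 : 'M[F]_(5, 1)))%MS.

Definition tangent_dim A p x : nat := \rank (tangent_space A p x).

Definition singular_at A p x : Prop := on_CA A p x /\ tangent_dim A p x != 1%N.

Definition singular_above A p : Prop := exists x, singular_at A p x.

End Defs.

From HB Require Import structures.
From mathcomp Require Import all_boot all_order all_algebra.
From mathcomp Require Import mpoly.
From mathcomp Require Import zify.
Set Implicit Arguments.
Unset Strict Implicit.
Unset Printing Implicit Defensive.
Import Order.TTheory GRing.Theory Num.Theory.
Local Open Scope ring_scope.

(* Take the point x = e_K of the fiber over p.  By (iii), (iv) and
   antisymmetry, rows and columns I and J of A(p, e_K) vanish, so every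
   4x4 principal sub-Pfaffian vanishes and (p, [e_K]) lies on C_A.  To first
   order at that point, rows and columns I and J are still zero except for
   the entries (I, J), (J, I), whose first-order terms vanish by (i) and (ii).
   A sub-Pfaffian Pf_m with m different from I and J contains both of these
   rows, hence has no first-order term; so only Pf_I and Pf_J contribute to
   the Jacobian, whose rank is at most 2, and the Zariski tangent space has
   dimension at least 5 - 2 - 1 = 2. *)

Lemma coef1M (R : nzSemiRingType) (a b : {poly R}) :
  (a * b)`_1 = a`_0 * b`_1 + a`_1 * b`_0.
Proof. by rewrite coefM big_ord_recl big_ord1. Qed.

Section MmapCoef.
Variable F : fieldType.
Implicit Types (h : 'I_2 -> {poly F}) (q u : {mpoly F[2]}).

Lemma coef0_mmap h q : (mmap (@polyC F) h q)`_0 = q.@[fun r => (h r)`_0].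
Proof.
rewrite mevalE /mmap coef_sum; apply: eq_bigr => m _.
rewrite coefCM /mmap1 -horner_coef0 horner_prod; congr (_ * _).
by apply: eq_bigr => i _; rewrite horner_exp horner_coef0.
Qed.

Lemma meval_eq0_dvd_pow (p : 'I_2 -> F) u q m :
  u.@[p] = 0 -> dvd_pow u q m.+1 -> q.@[p] = 0.
Proof. by move=> u0 [b ->]; rewrite mevalM rmorphXn /= u0 expr0n mul0r. Qed.

Lemma coef1_mmap_dvd_sqr h u q :
  u.@[fun r => (h r)`_0] = 0 -> dvd_pow u q 2 -> (mmap (@polyC F) h q)`_1 = 0.
Proof.
move=> u0 [b ->]; rewrite rmorphM rmorphXn expr2 coef1M coef0M coef1M.
by rewrite coef0_mmap u0 !(mul0r, mulr0, addr0).
Qed.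

End MmapCoef.

Lemma ord4P (a : 'I_4) : [\/ a = 0, a = 1, a = 2%:R | a = 3%:R].
Proof.
case: a => [[|[|[|[|a]]]] Ha] //;
  [apply: Or41 | apply: Or42 | apply: Or43 | apply: Or44]; exact/val_inj.
Qed.

Lemma pf4_eq0 (R : comPzRingType) (N : 'I_4 -> 'I_4 -> R) a :
  (forall j, N a j = 0) -> (forall j, N j a = 0) -> pf4 N = 0.
Proof.
move=> Na0 N0a; rewrite /pf4.
by case: (ord4P a) Na0 N0a => -> Na0 N0a;
  rewrite ?Na0 ?N0a !(mul0r, mulr0, subr0, sub0r, addr0, add0r, oppr0).
Qed.

Lemma subpf_eq0 (R : comPzRingType) (M : 'I_5 -> 'I_5 -> R) a m : m != a ->
  (forall j, M a j = 0) -> (forall j, M j a = 0) -> subpf M m = 0.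
Proof.
move=> ma Ma0 M0a; case: (unliftP m a) => [b Hb|Hm]; last by rewrite Hm eqxx in ma.
by apply: (@pf4_eq0 _ _ b) => j /=; rewrite -Hb.
Qed.

(* The first-order term of a Pfaffian whose rows a, b vanish at order 0 only
   sees the entries joining a and b. *)
Lemma coef1_pf4_eq0 (R : comNzRingType) (N : 'I_4 -> 'I_4 -> {poly R}) a b :
  a != b ->
  (forall j, (N a j)`_0 = 0) -> (forall j, (N j a)`_0 = 0) ->
  (forall j, (N b j)`_0 = 0) -> (forall j, (N j b)`_0 = 0) ->
  (N a b)`_1 = 0 -> (N b a)`_1 = 0 -> (pf4 N)`_1 = 0.
Proof.
move=> nab Na0 N0a Nb0 N0b Nab Nba; rewrite /pf4 coefD coefB !coef1M.
by case: (ord4P a) nab Na0 N0a Nab Nba => ->;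
  case: (ord4P b) Nb0 N0b => -> Nb0 N0b;
  rewrite // => _ Na0 N0a Nab Nba;
  rewrite ?Na0 ?N0a ?Nb0 ?N0b ?Nab ?Nba
          !(mul0r, mulr0, subr0, sub0r, addr0, add0r, oppr0).
Qed.

Lemma coef1_subpf_eq0 (R : comNzRingType) (M : 'I_5 -> 'I_5 -> {poly R}) a b m :
  a != b -> m != a -> m != b ->
  (forall j, (M a j)`_0 = 0) -> (forall j, (M j a)`_0 = 0) ->
  (forall j, (M b j)`_0 = 0) -> (forall j, (M j b)`_0 = 0) ->
  (M a b)`_1 = 0 -> (M b a)`_1 = 0 -> (subpf M m)`_1 = 0.
Proof.
move=> nab ma mb Ma0 M0a Mb0 M0b Mab Mba.
case: (unliftP m a) => [a' Ha|Hm]; last by rewrite Hm eqxx in ma.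
case: (unliftP m b) => [b' Hb|Hm]; last by rewrite Hm eqxx in mb.
apply: (@coef1_pf4_eq0 _ _ a' b') => [|j|j|j|j|/=|/=]; rewrite -?Ha -?Hb //.
by apply: contra nab => /eqP ab; rewrite Ha Hb ab.
Qed.

Section Rank.
Variable F : fieldType.

Lemma mxrank_two_rows m n (M : 'M[F]_(m, n)) a b :
  (forall i j, i != a -> i != b -> M i j = 0) -> (\rank M <= 2)%N.
Proof.
move=> M0; have sMab : (M <= row a M + row b M)%MS.
  apply/row_subP => i; case: (eqVneq i a) => [->|ia]; first exact: addsmxSl.
  case: (eqVneq i b) => [->|ib]; first exact: addsmxSr.
  suff -> : row i M = 0 by exact: sub0mx.
  by apply/rowP => j; rewrite !mxE M0.
apply: leq_trans (mxrankS sMab) _; apply: leq_trans (mxrank_adds_leqif _ _) _.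
by have := rank_leq_row (row a M); have := rank_leq_row (row b M); lia.
Qed.

Lemma mxrank_cap_kermx n (M : 'M[F]_n) (v : 'M[F]_(n, 1)) :
  (n - \rank M - 1 <= \rank (kermx M^T :&: kermx v))%N.
Proof.
have := rank_leq_col (kermx M^T + kermx v)%MS.
have := mxrank_sum_cap (kermx M^T) (kermx v).
have := rank_leq_col v.
rewrite !mxrank_ker mxrank_tr; lia.
Qed.

End Rank.

Section FirstOrder.
Variable F : fieldType.
Variables (A : 'I_4 -> 'I_5 -> 'I_5 -> {mpoly F[2]}) (p : 'I_2 -> F).
Implicit Types (x xi : 'I_4 -> F) (mu : F).

Definition dual_chart mu (r : 'I_2) : {poly F} := (p r)%:P + (mu * chartq p r) *: 'X.

Lemma dual_chart0 mu r : (dual_chart mu r)`_0 = p r.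
Proof. by rewrite coefD coefC coefZ coefX mulr0 addr0. Qed.

Lemma coef0_dualM x mu xi i j : (dualM A p x mu xi i j)`_0 = fiberM A p x i j.
Proof.
rewrite coef_sum; apply: eq_bigr => k _; rewrite coef0M.
rewrite (@coef0_mmap _ (dual_chart mu)) (meval_eq _ (dual_chart0 mu)).
by rewrite coefD coefC coefZ coefX mulr0 addr0.
Qed.

Lemma coef1_dualM x mu xi i j : (dualM A p x mu xi i j)`_1 =
  \sum_(k < 4) ((A k i j).@[p] * xi k
                + (mmap (@polyC F) (dual_chart mu) (A k i j))`_1 * x k).
Proof.
rewrite coef_sum; apply: eq_bigr => k _; rewrite coef1M.
rewrite (@coef0_mmap _ (dual_chart mu)) (meval_eq _ (dual_chart0 mu)).
by rewrite !coefD !coefC !coefZ !coefX mulr0 addr0 add0r mulr1.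
Qed.

Lemma fiberM_delta (K : 'I_4) i j :
  fiberM A p (fun k => (k == K)%:R) i j = (A K i j).@[p].
Proof.
rewrite /fiberM (bigD1 K) //= eqxx mulr1 big1 ?addr0 // => k /negbTE ->.
by rewrite mulr0.
Qed.

Hypothesis A_anti : forall k i j, A k j i = - A k i j.

Lemma fiberM_anti x i j : fiberM A p x j i = - fiberM A p x i j.
Proof.
by rewrite /fiberM -sumrN; apply: eq_bigr => k _; rewrite A_anti mevalN mulNr.
Qed.

Lemma dualM_anti x mu xi i j : dualM A p x mu xi j i = - dualM A p x mu xi i j.
Proof.
by rewrite /dualM -sumrN; apply: eq_bigr => k _; rewrite A_anti raddfN mulNr.
Qed.

End FirstOrder.

Section SingularPoint.
Variable F : fieldType.
Variables (A : 'I_4 -> 'I_5 -> 'I_5 -> {mpoly F[2]}) (p : 'I_2 -> F).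
Variables (u : {mpoly F[2]}) (I J : 'I_5) (K : 'I_4).
Hypotheses (A_anti : forall k i j, A k j i = - A k i j) (u_p : u.@[p] = 0).
Hypothesis neq_IJ : I != J.
Hypotheses (dvd2_KIJ : dvd_pow u (A K I J) 2)
  (dvd_IJ : forall k, dvd_pow u (A k I J) 1)
  (dvd_KI : forall j, dvd_pow u (A K I j) 1)
  (dvd_KJ : forall i, dvd_pow u (A K i J) 1).

Let x (k : 'I_4) : F := (k == K)%:R.

Lemma fiberM_row_eq0 a j : a \in [:: I; J] -> fiberM A p x a j = 0.
Proof.
rewrite !inE fiberM_delta => /orP[] /eqP ->.
  exact: meval_eq0_dvd_pow (dvd_KI j).
by rewrite A_anti mevalN (meval_eq0_dvd_pow u_p (dvd_KJ j)) oppr0.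
Qed.

Lemma fiberM_col_eq0 a j : a \in [:: I; J] -> fiberM A p x j a = 0.
Proof. by move=> aIJ; rewrite fiberM_anti // fiberM_row_eq0 ?oppr0. Qed.

Lemma on_CA_delta : on_CA A p x.
Proof.
split; first by exists K; rewrite /x eqxx oner_neq0.
move=> m; have [a aIJ ma] : exists2 a, a \in [:: I; J] & m != a.
  case: (eqVneq m I) => [->|]; last by exists I; rewrite ?mem_head.
  by exists J => //; rewrite !inE eqxx orbT.
by apply: (subpf_eq0 ma) => j; [apply: fiberM_row_eq0 | apply: fiberM_col_eq0].
Qed.

Lemma coef1_dualM_IJ mu xi : (dualM A p x mu xi I J)`_1 = 0.
Proof.
rewrite coef1_dualM big1 // => k _.
rewrite (meval_eq0_dvd_pow u_p (dvd_IJ k)) mul0r add0r /x.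
have [-> | _] := eqVneq k K; last by rewrite mulr0.
by rewrite (coef1_mmap_dvd_sqr _ dvd2_KIJ) ?mul0r // (meval_eq _ (dual_chart0 p mu)).
Qed.

Lemma jacobian_row_eq0 m c : m != I -> m != J -> jacobian A p x m c = 0.
Proof.
move=> mI mJ; rewrite mxE.
have I_in : I \in [:: I; J] by rewrite mem_head.
have J_in : J \in [:: I; J] by rewrite !inE eqxx orbT.
apply: (coef1_subpf_eq0 neq_IJ mI mJ) => [j|j|j|j||]; rewrite ?coef0_dualM.
- exact: fiberM_row_eq0.
- exact: fiberM_col_eq0.
- exact: fiberM_row_eq0.
- exact: fiberM_col_eq0.
- exact: coef1_dualM_IJ.
- by rewrite dualM_anti // coefN coef1_dualM_IJ oppr0.
Qed.

Lemma singular_at_delta : singular_at A p x.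
Proof.
split; first exact: on_CA_delta.
have rkJ := mxrank_two_rows jacobian_row_eq0.
have := mxrank_cap_kermx (jacobian A p x)
  (delta_mx (lift ord0 (chart_index x)) ord0).
rewrite /tangent_dim /tangent_space; lia.
Qed.

End SingularPoint.

Theorem lemma3p2 (F : closedFieldType) (hchar : [pchar F] =i pred0)
  (g : nat) (e : 'I_4 -> int) (f : 'I_5 -> int) (hef : splitting_data g e f)
  (A : 'I_4 -> 'I_5 -> 'I_5 -> {mpoly F[2]}) (hA : is_section g e f A)
  (p : 'I_2 -> F) (hp : P1_point p) (u : {mpoly F[2]}) (hu : uniformizer p u)
  (I J : 'I_5) (hIJ : (I < J)%N) (K : 'I_4)
  (h1 : dvd_pow u (A K I J) 2)
  (h2 : forall k : 'I_4, dvd_pow u (A k I J) 1)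
  (h3 : forall j : 'I_5, dvd_pow u (A K I j) 1)
  (h4 : forall i : 'I_5, dvd_pow u (A K i J) 1) :
  singular_above A p.
Proof.
(* The argument is local at p: the splitting type, the characteristic and the
   degrees of the entries play no role. *)
have [_ A_anti _] := hA; have [_ _ u_p] := hu.
have neq_IJ : I != J by rewrite neq_ltn hIJ.
by eexists; apply: (singular_at_delta A_anti u_p neq_IJ h1 h2 h3 h4).
Qed.
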